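(* With respect to the bracket $\{-,-\}_{\mathrm{loc}}$ on $\mathfrak h_{\mathrm{reg}}$, the functions $x_i$ and $f_{ij}=\sum_\alpha a_i^\alpha b_j^\alpha$ satisfy $\{x_i,x_k\}=0$, $\{x_i,f_{jk}\}=\delta_{ik}x_if_{jk}$ and $$\begin{aligned}\{f_{ij},f_{kl}\}=&\tfrac12 f_{ij}f_{kl}\Big[\delta_{(i\ne k)}\tfrac{x_i+x_k}{x_i-x_k}+\delta_{(j\ne l)}\tfrac{x_j+x_l}{x_j-x_l}+\delta_{(k\ne j)}\tfrac{x_k+x_j}{x_k-x_j}+\delta_{(l\ne i)}\tfrac{x_l+x_i}{x_l-x_i}\Big]\\&+\tfrac12 f_{il}f_{kj}\Big[\delta_{(i\ne k)}\tfrac{x_i+x_k}{x_i-x_k}+\delta_{(j\ne l)}\tfrac{x_j+x_l}{x_j-x_l}+\tfrac{x_k+qx_j}{x_k-qx_j}-\tfrac{x_i+qx_l}{x_i-qx_l}\Big]\\&+\tfrac12 f_{ij}f_{il}\Big[\delta_{(i\ne k)}\tfrac{x_k+x_i}{x_k-x_i}+\tfrac{x_i+qx_l}{x_i-qx_l}\Big]+\tfrac12 f_{ij}f_{jl}\Big[\delta_{(j\ne k)}\tfrac{x_j+x_k}{x_j-x_k}-\tfrac{x_j+qx_l}{x_j-qx_l}\Big]\\&+\tfrac12 f_{kj}f_{kl}\Big[\delta_{(i\ne k)}\tfrac{x_k+x_i}{x_k-x_i}-\tfrac{x_k+qx_j}{x_k-qx_j}\Big]+\tfrac12 f_{lj}f_{kl}\Big[\delta_{(i\ne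 l)}\tfrac{x_i+x_l}{x_i-x_l}+\tfrac{x_l+qx_j}{x_l-qx_j}\Big].\end{aligned}$$ Moreover, setting $T=\sum_k Z_{kk}=\frac{q}{1-q}\sum_k f_{kk}$ (the pullback of $\operatorname{tr}Z$), and $V_{ik}=\frac{x_i+x_k}{x_i-x_k}-\frac{x_i+qx_k}{x_i-qx_k}$, $$\{x_i,T\}=\tfrac{q}{1-q}x_if_{ii},\quad \{a_i^\gamma,T\}=-\tfrac{q}{2(1-q)}\sum_{k\ne i}V_{ik}(a_i^\gamma-a_k^\gamma)f_{ik},\quad \{b_j^\epsilon,T\}=\tfrac{q}{2(1-q)}\sum_{k\ne j}(V_{jk}b_j^\epsilon f_{jk}-V_{kj}b_k^\epsilon f_{kj}).$$
   Context: Fix integers $n,d\ge1$ and $q\in\mathbb C^\times$ not a root of unity. Greek indices range over $\{1,\dots,d\}$; $o(\alpha,\beta)=0,1,-1$ according as $\alpha=\beta$, $\alpha<\beta$, $\alpha>\beta$; $\delta_{(i\ne j)}=1-\delta_{ij}$, $\delta_{(\alpha<\beta)}=1$ if $\alpha<\beta$ and $0$ otherwise. Let $\mathfrak h$ be the affine space of $(x_i,a_i^\alpha,b_i^\alpha)$, $i=1,\dots,n$, subject to $\sum_\alpha a_i^\alpha=1$ for each $i$. Put $f_{ij}=\sum_\alpha a_i^\alpha b_j^\alpha$, $Z_{ij}=\frac{qx_jf_{ij}}{x_i-qx_j}$, $A_\alpha=(a_i^\alpha)_i$ (column), $B_\alpha=(b_i^\alpha)_i$ (row). Let $\mathfrak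 h_{\mathrm{reg}}\subset\mathfrak h$ be the open set where $x_i\neq0$, $x_i\ne x_j$ and $x_i\ne qx_j$ for $i\ne j$, and $Z$ and $Z+A_1B_1+\dots+A_\alpha B_\alpha$ ($\alpha=1,\dots,d$) are invertible. The bracket $\{-,-\}_{\mathrm{loc}}$ on $\mathfrak h_{\mathrm{reg}}$ is the antisymmetric biderivation with $\{x_i,x_j\}=0$, $\{x_i,a_j^\alpha\}=0$, $\{x_i,b_j^\alpha\}=\delta_{ij}x_ib_j^\alpha$, $\{a_i^\alpha,a_j^\beta\}=\tfrac12\delta_{(i\ne j)}\frac{x_i+x_j}{x_i-x_j}(a_i^\alpha a_j^\beta+a_j^\alpha a_i^\beta-a_j^\alpha a_j^\beta-a_i^\alpha a_i^\beta)+\tfrac12 o(\beta,\alpha)(a_i^\alpha a_j^\beta+a_j^\alpha a_i^\beta)+\tfrac12\sum_\gamma o(\alpha,\gamma)a_j^\beta(a_i^\alpha a_j^\gamma+a_j^\alpha a_i^\gamma)-\tfrac12\sum_\gamma o(\beta,\gamma)a_i^\alpha(a_j^\beta a_i^\gamma+a_i^\beta a_j^\gamma)$, $\{a_i^\alpha,b_j^\beta\}=a_i^\alpha Z_{ij}-\delta_{\alpha\beta}Z_{ij}-\tfrac12\delta_{(i\ne j)}\frac{x_i+x_j}{x_i-x_j}(a_i^\alpha-a_j^\alpha)b_j^\beta+\delta_{(\alpha<\beta)}a_i^\alpha b_j^\beta+a_i^\alpha\sum_{\gamma=1}^{\beta-1}a_i^\gamma(b_j^\gamma-b_j^\beta)-\delta_{\alpha\beta}\sum_{\gamma=1}^{\beta-1}a_i^\gamma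 b_j^\gamma-\tfrac12\sum_\gamma o(\alpha,\gamma)b_j^\beta(a_i^\alpha a_j^\gamma+a_j^\alpha a_i^\gamma)$, $\{b_i^\alpha,b_j^\beta\}=\tfrac12\delta_{(i\ne j)}\frac{x_i+x_j}{x_i-x_j}(b_i^\alpha b_j^\beta+b_j^\alpha b_i^\beta)-b_i^\alpha Z_{ij}+b_j^\beta Z_{ji}+\tfrac12 o(\beta,\alpha)(b_i^\alpha b_j^\beta-b_j^\alpha b_i^\beta)-b_i^\alpha\sum_{\gamma=1}^{\beta-1}a_i^\gamma(b_j^\gamma-b_j^\beta)+b_j^\beta\sum_{\gamma=1}^{\alpha-1}a_j^\gamma(b_i^\gamma-b_i^\alpha)$. (These formulas are compatible with the constraints $\sum_\alpha a_i^\alpha=1$.) *)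

From HB Require Import structures.
From mathcomp Require Import all_boot all_order all_algebra.
Set Implicit Arguments. Unset Strict Implicit. Unset Printing Implicit Defensive.
Import Order.TTheory GRing.Theory Num.Theory.
Local Open Scope ring_scope.

Inductive expr (V : Type) (R : Type) :=
| EVar of V
| EConst of R
| EAdd of expr V R & expr V R
| EMul of expr V R & expr V R.

Section Expr.
Variables (V : eqType) (R : comNzRingType).

Fixpoint eval (e : expr V R) (p : V -> R) : R :=
  match e with
  | EVar v => p v
  | EConst c => c
  | EAdd e1 e2 => eval e1 p + eval e2 p
  | EMul e1 e2 => eval e1 p * eval e2 p
  end.

Fixpoint pderiv (u : V) (e : expr V R) : expr V R :=
  match e with
  | EVar v => EConst V (if v == u then 1 else 0)
  | EConst _ => EConst V 0
  | EAdd e1 e2 => EAdd (pderiv u e1) (pderiv u e2)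
  | EMul e1 e2 => EAdd (EMul (pderiv u e1) e2) (EMul e1 (pderiv u e2))
  end.

Definition esum (s : seq (expr V R)) : expr V R := foldr (@EAdd V R) (EConst V 0) s.
End Expr.

(* indices i : 'I_n stand for 1..n, Greek indices al : 'I_d stand for 1..d (same order) *)
Definition var (n d : nat) : finType := ('I_n + ('I_n * 'I_d) + ('I_n * 'I_d))%type.
Definition vX {n d : nat} (i : 'I_n) : var n d := inl (inl i).
Definition vA {n d : nat} (i : 'I_n) (al : 'I_d) : var n d := inl (inr (i, al)).
Definition vB {n d : nat} (i : 'I_n) (al : 'I_d) : var n d := inr (i, al).

Section Bracket.
Variables (C : numClosedFieldType) (n d : nat) (q : C).
Implicit Types (p : var n d -> C) (i j : 'I_n) (al be : 'I_d).

Definition xv p i := p (vX i).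
Definition av p i al := p (vA i al).
Definition bv p i al := p (vB i al).

Definition fv p i j := \sum_(al < d) av p i al * bv p j al.
Definition Zv p i j := q * xv p j * fv p i j / (xv p i - q * xv p j).

Definition ord_sgn al be : C := if al == be then 0 else if (al < be)%N then 1 else -1.
Definition cx p i j := (xv p i + xv p j) / (xv p i - xv p j).

Definition br_xb p i j be : C := (i == j)%:R * xv p i * bv p j be.

Definition br_aa p i al j be : C :=
  2^-1 * (i != j)%:R * cx p i j *
    (av p i al * av p j be + av p j al * av p i be - av p j al * av p j be - av p i al * av p i be)
  + 2^-1 * ord_sgn be al * (av p i al * av p j be + av p j al * av p i be)
  + 2^-1 * \sum_(ga < d) ord_sgn al ga * av p j be * (av p i al * av p j ga + av p j al * av p i ga)
  - 2^-1 * \sum_(ga < d) ord_sgn be ga * av p i al * (av p j be * av p i ga + av p i be * av p j ga).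

Definition br_ab p i al j be : C :=
  av p i al * Zv p i j - (al == be)%:R * Zv p i j
  - 2^-1 * (i != j)%:R * cx p i j * (av p i al - av p j al) * bv p j be
  + (al < be)%N%:R * av p i al * bv p j be
  + av p i al * \sum_(ga < d | (ga < be)%N) av p i ga * (bv p j ga - bv p j be)
  - (al == be)%:R * \sum_(ga < d | (ga < be)%N) av p i ga * bv p j ga
  - 2^-1 * \sum_(ga < d) ord_sgn al ga * bv p j be * (av p i al * av p j ga + av p j al * av p i ga).

Definition br_bb p i al j be : C :=
  2^-1 * (i != j)%:R * cx p i j * (bv p i al * bv p j be + bv p j al * bv p i be)
  - bv p i al * Zv p i j + bv p j be * Zv p j i
  + 2^-1 * ord_sgn be al * (bv p i al * bv p j be - bv p j al * bv p i be)
  - bv p i al * \sum_(ga < d | (ga < be)%N) av p i ga * (bv p j ga - bv p j be)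
  + bv p j be * \sum_(ga < d | (ga < al)%N) av p j ga * (bv p i ga - bv p i al).

(* bracket of two coordinate functions, extended by antisymmetry *)
Definition gbr p (u v : var n d) : C :=
  match u, v with
  | inl (inl _), inl (inl _) => 0
  | inl (inl _), inl (inr _) => 0
  | inl (inl i), inr (j, be) => br_xb p i j be
  | inl (inr _), inl (inl _) => 0
  | inl (inr (i, al)), inl (inr (j, be)) => br_aa p i al j be
  | inl (inr (i, al)), inr (j, be) => br_ab p i al j be
  | inr (i, al), inl (inl j) => - br_xb p j i al
  | inr (i, al), inl (inr (j, be)) => - br_ab p j be i al
  | inr (i, al), inr (j, be) => br_bb p i al j be
  end.

(* {F,G}_loc at p : the biderivation determined by the brackets of coordinates *)
Definition pbr (F G : expr (var n d) C) p : C :=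
  \sum_(u : var n d) \sum_(v : var n d)
     eval (pderiv u F) p * eval (pderiv v G) p * gbr p u v.

Definition xE i : expr (var n d) C := EVar C (vX i).
Definition aE i al : expr (var n d) C := EVar C (vA i al).
Definition bE i al : expr (var n d) C := EVar C (vB i al).
Definition fE i j : expr (var n d) C :=
  esum [seq EMul (aE i al) (bE j al) | al <- enum 'I_d].
Definition TE : expr (var n d) C :=
  EMul (EConst _ (q / (1 - q))) (esum [seq fE k k | k <- enum 'I_n]).

Definition Zmx p : 'M[C]_n := \matrix_(i < n, j < n) Zv p i j.
Definition ABmx p al : 'M[C]_n := \matrix_(i < n, j < n) (av p i al * bv p j al).

Definition in_hreg p : Prop :=
  [/\ (forall i, \sum_(al < d) av p i al = 1),
      (forall i, xv p i != 0),
      (forall i j, i != j -> xv p i != xv p j /\ xv p i != q * xv p j),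
      Zmx p \in unitmx &
      (forall al : 'I_d, Zmx p + \sum_(be < d | (be <= al)%N) ABmx p be \in unitmx)].

End Bracket.

Arguments xE {C n d} i.
Arguments aE {C n d} i al.
Arguments bE {C n d} i al.
Arguments fE {C n d} i j.
Arguments TE {C n d} q.

From HB Require Import structures.
From mathcomp Require Import all_boot all_order all_algebra.
From mathcomp Require Import ring.
Set Implicit Arguments. Unset Strict Implicit. Unset Printing Implicit Defensive.
Import Order.TTheory GRing.Theory Num.Theory.
Local Open Scope ring_scope.

(* The computation has three
   layers.
   1. A polynomial expression F and a "vector field" g on the coordinates give
      the derivation [der g F] = sum_u dF/du(p) g(u), which obeys linearity and
      the Leibniz rule; pbr F G is the iterated derivation
      der (u |-> der (gbr u) G) F.  This turns the brackets of x_i, a_i^ga,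
      b_j^ep with x_k, f_kl and T into explicit finite sums over Greek indices.
   2. Those sums involve the sign o(al,be) and truncated sums over ga < be.
      Each summand is rewritten (by [ring]) as a combination of kernel
      monomials c * K(al,be) * u(al) * v(be) with K one of 1, [al = be],
      [al < be], [al > be]; summed, these become totals sum u, sum u*v and
      ordered-pair sums sum_(al<be) u(al) v(be), and the ordered-pair sums
      cancel against each other through
      sum_(al<be) + sum_(al>be) = (sum u)(sum v) - sum u*v.
   3. On h_reg one has sum_al a_i^al = 1, the remaining totals are the f_ij,
      and what is left is a rational identity in the x_i, checked by [field];
      its denominators x_i - q x_l are nonzero because q <> 1 and x_i <> 0. *)

Section Derivations.
Variables (V : finType) (R : comNzRingType) (p : V -> R).

Definition der (g : V -> R) (F : expr V R) : R :=
  \sum_(u : V) eval (pderiv u F) p * g u.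

Lemma der_var g v : der g (EVar R v) = g v.
Proof.
rewrite /der (bigD1 v) //= eqxx mul1r big1 ?addr0 // => u /negbTE.
by rewrite eq_sym => ->; rewrite mul0r.
Qed.

Lemma der_const g c : der g (EConst V c) = 0.
Proof. by rewrite /der big1 // => u _; rewrite mul0r. Qed.

Lemma der_add g F G : der g (EAdd F G) = der g F + der g G.
Proof. by rewrite /der -big_split; apply: eq_bigr => u _; rewrite /= mulrDl. Qed.

Lemma der_mul g F G : der g (EMul F G) = eval G p * der g F + eval F p * der g G.
Proof. by rewrite /der !mulr_sumr -big_split; apply: eq_bigr => u _ /=; ring. Qed.

Lemma der_esum g (s : seq (expr V R)) : der g (esum s) = \sum_(F <- s) der g F.
Proof.
elim: s => [|F s IH]; first by rewrite big_nil der_const.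
by rewrite big_cons der_add IH.
Qed.

Lemma der_scale g c F : der g (EMul (EConst V c) F) = c * der g F.
Proof. by rewrite der_mul der_const mulr0 add0r. Qed.
End Derivations.

Section BracketAsDerivation.
Variables (C : numClosedFieldType) (n d : nat) (q : C) (p : var n d -> C).

Lemma pbr_der F G : pbr q F G p = der p (fun u => der p (gbr q p u) G) F.
Proof.
rewrite /pbr /der; apply: eq_bigr => u _; rewrite mulr_sumr.
by apply: eq_bigr => v _; rewrite mulrA.
Qed.

Lemma pbr_coord u G : pbr q (EVar C u) G p = der p (gbr q p u) G.
Proof. by rewrite pbr_der der_var. Qed.

Lemma der_fE g i j : der p g (fE i j) =
  \sum_(al < d) (bv p j al * g (vA i al) + av p i al * g (vB j al)).
Proof.
rewrite der_esum big_map -[RHS]big_enum /=; apply: eq_bigr => al _.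
by rewrite der_mul !der_var.
Qed.

Lemma der_TE g : der p g (TE q) = q / (1 - q) * \sum_(k < n) der p g (fE k k).
Proof. by rewrite der_scale der_esum big_map -big_enum. Qed.

Lemma pbr_xx i k : pbr q (xE i) (xE k) p = 0.
Proof. by rewrite pbr_coord der_var. Qed.

(* The Hamiltonian field of x_i only moves the b_i^al, by scaling. *)
Lemma der_x_f i j k : der p (gbr q p (vX i)) (fE j k) = (i == k)%:R * xv p i * fv p j k.
Proof.
rewrite der_fE /fv mulr_sumr; apply: eq_bigr => al _ /=.
by rewrite /br_xb; ring.
Qed.

Lemma pbr_xf i j k : pbr q (xE i) (fE j k) p = (i == k)%:R * xv p i * fv p j k.
Proof. by rewrite pbr_coord der_x_f. Qed.

Lemma pbr_xT i : pbr q (xE i) (TE q) p = q / (1 - q) * xv p i * fv p i i.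
Proof.
rewrite pbr_coord der_TE -[RHS]mulrA; congr (_ * _).
rewrite (bigD1 i) //= der_x_f eqxx mul1r big1 ?addr0 // => k ne_ki.
by rewrite der_x_f eq_sym (negbTE ne_ki) !mul0r.
Qed.
End BracketAsDerivation.

Section GreekSums.
Variables (R : comNzRingType) (d : nat).
Implicit Types (u v w : 'I_d -> R) (x y : 'I_d).

Definition gsum u := \sum_(x < d) u x.
Definition below x w := \sum_(ga < d) (ga < x)%N%:R * w ga.
Definition above x w := \sum_(ga < d) (x < ga)%N%:R * w ga.
Definition ordpair u v := \sum_(al < d) \sum_(be < d) (al < be)%N%:R * (u al * v be).
Definition times_below u w := fun x => u x * below x w.

Lemma below_above x w : below x w + above x w = gsum w - w x.
Proof.
rewrite /below /above /gsum -big_split /= (bigD1 x) //= ltnn !mul0r !add0r.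
rewrite [in RHS](bigD1 x) //= [RHS]addrC addKr; apply: eq_bigr => ga ne_gax.
case: ltngtP => h; rewrite ?mul1r ?mul0r ?addr0 ?add0r //.
by move: ne_gax; rewrite (val_inj h) eqxx.
Qed.

Lemma above_below x w : above x w = gsum w - w x - below x w.
Proof. by rewrite -below_above; ring. Qed.

Lemma gsum_times_below u w : gsum (times_below u w) = ordpair w u.
Proof.
rewrite /gsum /times_below /ordpair /below exchange_big; apply: eq_bigr => al _.
by rewrite mulr_sumr; apply: eq_bigr => be _; ring.
Qed.

Lemma gsum_times_below_l u v w : gsum (u \* times_below v w) = ordpair w (v \* u).
Proof. by rewrite -gsum_times_below; apply: eq_bigr => x _; rewrite /times_below /=; ring. Qed.

Lemma gsum_times_below_r u v w : gsum (times_below u w \* v) = ordpair w (u \* v).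
Proof. by rewrite -gsum_times_below; apply: eq_bigr => x _; rewrite /times_below /=; ring. Qed.

Lemma gsum_mulC u v : gsum (u \* v) = gsum (v \* u).
Proof. by apply: eq_bigr => x _ /=; rewrite mulrC. Qed.

Lemma ordpair_add_swap u v : ordpair u v + ordpair v u = gsum u * gsum v - gsum (u \* v).
Proof.
rewrite /ordpair [X in _ + X]exchange_big -big_split /= /gsum mulr_suml -sumrB.
apply: eq_bigr => al _; rewrite -big_split mulr_sumr /= (bigD1 al) //= ltnn !mul0r addr0 add0r.
rewrite [in RHS](bigD1 al) //= [RHS]addrAC subrr add0r; apply: eq_bigr => be ne_beal.
case: ltngtP => h; rewrite ?mul1r ?mul0r ?addr0 ?add0r 1?mulrC //.
by move: ne_beal; rewrite (val_inj h) eqxx.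
Qed.

Lemma ordpair_swap u v : ordpair v u = gsum u * gsum v - gsum (u \* v) - ordpair u v.
Proof. by rewrite -ordpair_add_swap; ring. Qed.

Lemma below_cond x u v :
  \sum_(ga < d | (ga < x)%N) u ga * v ga = below x (u \* v).
Proof. by rewrite big_mkcond; apply: eq_bigr => ga _ /=; case: ifP; rewrite ?mul1r ?mul0r. Qed.

Lemma below_cond_shift x (c : R) u v :
  \sum_(ga < d | (ga < x)%N) u ga * (v ga - c) = below x (u \* v) - c * below x u.
Proof.
rewrite /below mulr_sumr -sumrB big_mkcond; apply: eq_bigr => ga _ /=.
by case: ifP => _; rewrite ?mul1r ?mul0r //; ring.
Qed.
End GreekSums.

Section SignedSums.
Variables (C : numClosedFieldType) (d : nat).
Implicit Types (u v w : 'I_d -> C) (x y : 'I_d).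

Definition osum x w := \sum_(ga < d) ord_sgn C x ga * w ga.
Definition times_osum u w := fun x => u x * osum x w.

Lemma ord_sgnE x y : ord_sgn C x y = (x < y)%N%:R - (y < x)%N%:R.
Proof.
rewrite /ord_sgn; case: ltngtP => h.
- by rewrite ifF ?subr0 //; apply/negbTE; rewrite neq_ltn h.
- by rewrite ifF ?sub0r //; apply/negbTE; rewrite neq_ltn h orbT.
- by rewrite ifT ?subrr //; apply/eqP/val_inj.
Qed.

Lemma osumE x w : osum x w = above x w - below x w.
Proof. by rewrite /osum /above /below -sumrB; apply: eq_bigr => ga _; rewrite ord_sgnE mulrBl. Qed.

Lemma gsum_times_osum u w : gsum (times_osum u w) = ordpair u w - ordpair w u.
Proof.
have -> : ordpair u w = gsum (fun x => u x * above x w).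
  rewrite /ordpair /gsum; apply: eq_bigr => al _; rewrite /above mulr_sumr.
  by apply: eq_bigr => be _; ring.
rewrite -gsum_times_below /gsum -sumrB; apply: eq_bigr => x _.
by rewrite /times_osum /times_below osumE mulrBr.
Qed.
Lemma osum_combination x (c c1 c2 : C) u v :
  \sum_(ga < d) ord_sgn C x ga * c * (c1 * u ga + c2 * v ga)
  = c * (c1 * osum x u + c2 * osum x v).
Proof. by rewrite /osum !mulr_sumr -big_split mulr_sumr; apply: eq_bigr => ga _ /=; ring. Qed.
End SignedSums.

(* A sum over al, be (or over be, for a fixed anchor c) of
   c * K(al,be) * u(al) * v(be), with K one of the four kernels below, is
   evaluated in closed form in terms of totals and ordered-pair sums.  Lists
   of such monomials are the normal forms of the summands of the brackets. *)
Section KernelMonomials.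
Variables (R : comNzRingType) (d : nat).
Implicit Types (u v : 'I_d -> R) (c x y : 'I_d).

Inductive kernel := KOne | KEq | KLt | KGt.

Definition kernel_val k x y : R :=
  match k with
  | KOne => 1 | KEq => (x == y)%:R | KLt => (x < y)%N%:R | KGt => (y < x)%N%:R
  end.

Definition kernel_pair k u v : R :=
  match k with
  | KOne => gsum u * gsum v | KEq => gsum (u \* v)
  | KLt => ordpair u v | KGt => ordpair v u
  end.

Definition kernel_at k c u : R :=
  match k with
  | KOne => gsum u | KEq => u c | KLt => above c u | KGt => below c u
  end.

Record bimonomial := BiMono
  { bm_coef : R; bm_kernel : kernel; bm_left : 'I_d -> R; bm_right : 'I_d -> R }.
Record monomial := Mono { m_coef : R; m_kernel : kernel; m_fun : 'I_d -> R }.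

Definition bidensity (l : seq bimonomial) x y : R :=
  \sum_(t <- l) bm_coef t * (kernel_val (bm_kernel t) x y * (bm_left t x * bm_right t y)).
Definition bievaluate (l : seq bimonomial) : R :=
  \sum_(t <- l) bm_coef t * kernel_pair (bm_kernel t) (bm_left t) (bm_right t).

Definition density c (l : seq monomial) y : R :=
  \sum_(t <- l) m_coef t * (kernel_val (m_kernel t) c y * m_fun t y).
Definition evaluate c (l : seq monomial) : R :=
  \sum_(t <- l) m_coef t * kernel_at (m_kernel t) c (m_fun t).

Lemma sum_kernel_pair a k u v :
  \sum_(al < d) \sum_(be < d) a * (kernel_val k al be * (u al * v be)) = a * kernel_pair k u v.
Proof.
case: k => /=.
- rewrite /gsum mulr_suml mulr_sumr; apply: eq_bigr => al _.
  by rewrite !mulr_sumr; apply: eq_bigr => be _; ring.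
- rewrite /gsum mulr_sumr; apply: eq_bigr => al _ /=.
  rewrite (bigD1 al) //= eqxx mul1r big1 ?addr0 // => be /negbTE.
  by rewrite eq_sym => ->; rewrite mul0r mulr0.
- by rewrite /ordpair mulr_sumr; apply: eq_bigr => al _; rewrite mulr_sumr.
- rewrite /ordpair exchange_big mulr_sumr; apply: eq_bigr => al _.
  by rewrite mulr_sumr; apply: eq_bigr => be _; ring.
Qed.

Lemma sum_bidensity l : \sum_(al < d) \sum_(be < d) bidensity l al be = bievaluate l.
Proof.
elim: l => [|t l IH].
  rewrite /bievaluate big_nil big1 // => al _.
  by rewrite big1 // => be _; rewrite /bidensity big_nil.
rewrite /bievaluate big_cons -/(bievaluate l) -IH -sum_kernel_pair -big_split /=.
apply: eq_bigr => al _; rewrite -big_split /=; apply: eq_bigr => be _.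
by rewrite /bidensity big_cons.
Qed.

Lemma sum_kernel_at a k c u :
  \sum_(be < d) a * (kernel_val k c be * u be) = a * kernel_at k c u.
Proof.
rewrite -mulr_sumr; congr (_ * _); case: k => //=.
- by apply: eq_bigr => be _; rewrite mul1r.
- rewrite (bigD1 c) //= eqxx mul1r big1 ?addr0 // => be /negbTE.
  by rewrite eq_sym => ->; rewrite mul0r.
Qed.

Lemma sum_density c l : \sum_(be < d) density c l be = evaluate c l.
Proof.
elim: l => [|t l IH].
  by rewrite /evaluate big_nil big1 // => be _; rewrite /density big_nil.
rewrite /evaluate big_cons -/(evaluate c l) -IH -sum_kernel_at -big_split /=.
by apply: eq_bigr => be _; rewrite /density big_cons.
Qed.
End KernelMonomials.

(* The summands of {f_ij, f_kl}, {a_i^c, T} and {b_j^c, T}, written as lists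
   of kernel monomials; each pointwise identity is a ring identity once the
   inner sums over ga are expressed through [osum] and [below]. *)
Section Expansions.
Variables (C : numClosedFieldType) (n d : nat) (q : C) (p : var n d -> C).
Local Notation A := (av p).
Local Notation B := (bv p).
Local Notation h := (2^-1 : C).

Definition ff_aa i j k l : seq (bimonomial C d) :=
  let c1 := h * (i != k)%:R * cx p i k in
  [:: BiMono c1 KOne (A i \* B j) (A k \* B l);
      BiMono c1 KOne (A k \* B j) (A i \* B l);
      BiMono (- c1) KOne (A k \* B j) (A k \* B l);
      BiMono (- c1) KOne (A i \* B j) (A i \* B l);
      BiMono h KGt (A i \* B j) (A k \* B l);
      BiMono (- h) KLt (A i \* B j) (A k \* B l);
      BiMono h KGt (A k \* B j) (A i \* B l);
      BiMono (- h) KLt (A k \* B j) (A i \* B l);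
      BiMono h KOne (times_osum (A i \* B j) (A k)) (A k \* B l);
      BiMono h KOne (times_osum (A k \* B j) (A i)) (A k \* B l);
      BiMono (- h) KOne (A i \* B j) (times_osum (A k \* B l) (A i));
      BiMono (- h) KOne (A i \* B j) (times_osum (A i \* B l) (A k))].

Lemma ff_aa_pointwise i j k l al be :
  B j al * B l be * br_aa p i al k be = bidensity (ff_aa i j k l) al be.
Proof.
rewrite /br_aa !osum_combination /bidensity /ff_aa !big_cons big_nil /times_osum /=.
by rewrite !ord_sgnE; ring.
Qed.

Definition ff_ab i j k l : seq (bimonomial C d) :=
  let Z := Zv q p i l in
  let c2 := h * (i != l)%:R * cx p i l in
  [:: BiMono Z KOne (A i \* B j) (A k);
      BiMono (- Z) KEq (B j) (A k);
      BiMono (- c2) KOne (A i \* B j) (A k \* B l);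
      BiMono c2 KOne (A l \* B j) (A k \* B l);
      BiMono 1 KLt (A i \* B j) (A k \* B l);
      BiMono 1 KOne (A i \* B j) (times_below (A k) (A i \* B l));
      BiMono (-1) KOne (A i \* B j) (times_below (A k \* B l) (A i));
      BiMono (-1) KEq (B j) (times_below (A k) (A i \* B l));
      BiMono (- h) KOne (times_osum (A i \* B j) (A l)) (A k \* B l);
      BiMono (- h) KOne (times_osum (A l \* B j) (A i)) (A k \* B l)].

Lemma ff_ab_pointwise i j k l al be :
  B j al * A k be * br_ab q p i al l be = bidensity (ff_ab i j k l) al be.
Proof.
rewrite /br_ab osum_combination below_cond_shift below_cond /bidensity /ff_ab.
by rewrite !big_cons big_nil /times_osum /times_below /=; ring.
Qed.

Definition ff_ba i j k l : seq (bimonomial C d) :=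
  let Z := Zv q p k j in
  let c3 := h * (k != j)%:R * cx p k j in
  [:: BiMono (- Z) KOne (A i) (A k \* B l);
      BiMono Z KEq (A i) (B l);
      BiMono c3 KOne (A i \* B j) (A k \* B l);
      BiMono (- c3) KOne (A i \* B j) (A j \* B l);
      BiMono (-1) KGt (A i \* B j) (A k \* B l);
      BiMono (-1) KOne (times_below (A i) (A k \* B j)) (A k \* B l);
      BiMono 1 KOne (times_below (A i \* B j) (A k)) (A k \* B l);
      BiMono 1 KEq (times_below (A i) (A k \* B j)) (B l);
      BiMono h KOne (A i \* B j) (times_osum (A k \* B l) (A j));
      BiMono h KOne (A i \* B j) (times_osum (A j \* B l) (A k))].

Lemma ff_ba_pointwise i j k l al be :
  A i al * (B l be * - br_ab q p k be j al) = bidensity (ff_ba i j k l) al be.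
Proof.
rewrite /br_ab osum_combination below_cond_shift below_cond /bidensity /ff_ba.
by rewrite !big_cons big_nil /times_osum /times_below /= [be == al]eq_sym; ring.
Qed.

Definition ff_bb i j k l : seq (bimonomial C d) :=
  let c4 := h * (j != l)%:R * cx p j l in
  [:: BiMono c4 KOne (A i \* B j) (A k \* B l);
      BiMono c4 KOne (A i \* B l) (A k \* B j);
      BiMono (- Zv q p j l) KOne (A i \* B j) (A k);
      BiMono (Zv q p l j) KOne (A i) (A k \* B l);
      BiMono h KGt (A i \* B j) (A k \* B l);
      BiMono (- h) KLt (A i \* B j) (A k \* B l);
      BiMono (- h) KGt (A i \* B l) (A k \* B j);
      BiMono h KLt (A i \* B l) (A k \* B j);
      BiMono (-1) KOne (A i \* B j) (times_below (A k) (A j \* B l));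
      BiMono 1 KOne (A i \* B j) (times_below (A k \* B l) (A j));
      BiMono 1 KOne (times_below (A i) (A l \* B j)) (A k \* B l);
      BiMono (-1) KOne (times_below (A i \* B j) (A l)) (A k \* B l)].

Lemma ff_bb_pointwise i j k l al be :
  A i al * (A k be * br_bb q p j al l be) = bidensity (ff_bb i j k l) al be.
Proof.
rewrite /br_bb !below_cond_shift /bidensity /ff_bb !big_cons big_nil /times_below /=.
by rewrite !ord_sgnE; ring.
Qed.

Lemma pbr_ff_expand i j k l : pbr q (fE i j) (fE k l) p =
  bievaluate (ff_aa i j k l) + bievaluate (ff_ab i j k l)
  + bievaluate (ff_ba i j k l) + bievaluate (ff_bb i j k l).
Proof.
rewrite pbr_der der_fE -!sum_bidensity -!big_split /=; apply: eq_bigr => al _.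
rewrite !der_fE !mulr_sumr -!big_split /=; apply: eq_bigr => be _.
rewrite -ff_aa_pointwise -ff_ab_pointwise -ff_ba_pointwise -ff_bb_pointwise /=; ring.
Qed.

Definition aT_terms i (c : 'I_d) k : seq (monomial C d) :=
  let c1 := h * (i != k)%:R * cx p i k in
  let Z := Zv q p i k in
  [:: Mono (c1 * A i c) KOne (A k \* B k);
      Mono (c1 * A k c) KOne (A i \* B k);
      Mono (- (c1 * A k c)) KOne (A k \* B k);
      Mono (- (c1 * A i c)) KOne (A i \* B k);
      Mono (h * A i c) KGt (A k \* B k);
      Mono (- (h * A i c)) KLt (A k \* B k);
      Mono (h * A k c) KGt (A i \* B k);
      Mono (- (h * A k c)) KLt (A i \* B k);
      Mono (h * (A i c * osum c (A k) + A k c * osum c (A i))) KOne (A k \* B k);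
      Mono (- (h * A i c)) KOne (times_osum (A k \* B k) (A i));
      Mono (- (h * A i c)) KOne (times_osum (A i \* B k) (A k));
      Mono (A i c * Z) KOne (A k);
      Mono (- Z) KEq (A k);
      Mono (- (c1 * (A i c - A k c))) KOne (A k \* B k);
      Mono (A i c) KLt (A k \* B k);
      Mono (A i c) KOne (times_below (A k) (A i \* B k));
      Mono (- A i c) KOne (times_below (A k \* B k) (A i));
      Mono (-1) KEq (times_below (A k) (A i \* B k));
      Mono (- (h * (A i c * osum c (A k) + A k c * osum c (A i)))) KOne (A k \* B k)].

Lemma der_aT_expand i c k :
  der p (gbr q p (vA i c)) (fE k k) = evaluate c (aT_terms i c k).
Proof.
rewrite der_fE -sum_density; apply: eq_bigr => be _ /=.
rewrite /br_aa /br_ab !osum_combination below_cond_shift below_cond /density /aT_terms.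
by rewrite !big_cons big_nil /times_osum /times_below /= !ord_sgnE; ring.
Qed.

Definition bT_terms j (c : 'I_d) k : seq (monomial C d) :=
  let c3 := h * (k != j)%:R * cx p k j in
  let c4 := h * (j != k)%:R * cx p j k in
  let Z := Zv q p k j in
  [:: Mono (- Z) KOne (A k \* B k);
      Mono Z KEq (B k);
      Mono (c3 * B j c) KOne (A k \* B k);
      Mono (- (c3 * B j c)) KOne (A j \* B k);
      Mono (- B j c) KGt (A k \* B k);
      Mono (- (below c (A k \* B j) - B j c * below c (A k))) KOne (A k \* B k);
      Mono (below c (A k \* B j)) KEq (B k);
      Mono (h * B j c) KOne (times_osum (A k \* B k) (A j));
      Mono (h * B j c) KOne (times_osum (A j \* B k) (A k));
      Mono (c4 * B j c) KOne (A k \* B k);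
      Mono (c4 * B k c) KOne (A k \* B j);
      Mono (- (B j c * Zv q p j k)) KOne (A k);
      Mono Z KOne (A k \* B k);
      Mono (h * B j c) KGt (A k \* B k);
      Mono (- (h * B j c)) KLt (A k \* B k);
      Mono (- (h * B k c)) KGt (A k \* B j);
      Mono (h * B k c) KLt (A k \* B j);
      Mono (- B j c) KOne (times_below (A k) (A j \* B k));
      Mono (B j c) KOne (times_below (A k \* B k) (A j));
      Mono (below c (A k \* B j) - B j c * below c (A k)) KOne (A k \* B k)].

Lemma der_bT_expand j c k :
  der p (gbr q p (vB j c)) (fE k k) = evaluate c (bT_terms j c k).
Proof.
rewrite der_fE -sum_density; apply: eq_bigr => be _ /=.
rewrite /br_bb /br_ab !osum_combination !below_cond_shift below_cond /density /bT_terms.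
by rewrite !big_cons big_nil /times_osum /times_below /= !ord_sgnE [be == c]eq_sym; ring.
Qed.
End Expansions.

(* The coefficient (x_i + x_k)/(x_i - x_k); on the diagonal the denominator
   vanishes, so in MathComp (where 0^-1 = 0) the masks (i != k) are harmless. *)
Section CrossRatio.
Variables (C : numClosedFieldType) (n d : nat) (p : var n d -> C).

Lemma cx_mask c i k : c * (i != k)%:R * cx p i k = c * cx p i k.
Proof.
case: (eqVneq i k) => [->|_]; last by rewrite mulr1.
by rewrite /cx subrr invr0 !mulr0.
Qed.

Lemma cx_masked i k : (i != k)%:R * (xv p i + xv p k) / (xv p i - xv p k) = cx p i k.
Proof.
case: (eqVneq i k) => [->|_]; last by rewrite mul1r.
by rewrite /cx subrr invr0 !mulr0.
Qed.

Lemma cx_masked_sym i k : (i != k)%:R * (xv p k + xv p i) / (xv p k - xv p i) = cx p k i.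
Proof. by rewrite eq_sym cx_masked. Qed.

Lemma cx_antisym i k : cx p k i = - cx p i k.
Proof. by rewrite /cx -opprB invrN mulrN addrC. Qed.
End CrossRatio.

Section OnRegularLocus.
Variables (C : numClosedFieldType) (n d : nat) (q : C) (p : var n d -> C).
Hypothesis a_sum1 : forall i, \sum_(al < d) av p i al = 1.
Hypothesis q_neq1 : q != 1.
Hypothesis x_neq0 : forall i, xv p i != 0.
Hypothesis x_neq_qx : forall i j, i != j -> xv p i != q * xv p j.
Local Notation A := (av p).
Local Notation B := (bv p).

Lemma gsum_a i : gsum (A i) = 1. Proof. exact: a_sum1. Qed.
Lemma gsum_ab i j : gsum (A i \* B j) = fv p i j. Proof. by []. Qed.
Lemma gsum_ba i j : gsum (B j \* A i) = fv p i j. Proof. by rewrite gsum_mulC. Qed.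
Lemma gsum_aba x y z : gsum (A x \* B y \* A z) = gsum (A z \* B y \* A x).
Proof. by apply: eq_bigr => al _ /=; ring. Qed.

Lemma denom_neq0 i l : xv p i - q * xv p l != 0.
Proof.
rewrite subr_eq0; case: (eqVneq i l) => [->|ne]; last exact: x_neq_qx.
apply/negP => /eqP eq_xqx.
have : (1 - q) * xv p l == 0 by rewrite mulrBl mul1r -eq_xqx subrr.
by rewrite mulf_eq0 subr_eq0 eq_sym (negbTE q_neq1) (negbTE (x_neq0 l)).
Qed.

Lemma Zv_cross i l :
  Zv q p i l = 2^-1 * fv p i l * ((xv p i + q * xv p l) / (xv p i - q * xv p l) - 1).
Proof. by rewrite /Zv; field; rewrite denom_neq0. Qed.

Definition vcoef i k := cx p i k - (xv p i + q * xv p k) / (xv p i - q * xv p k).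

Lemma pbr_ff i j k l :
  let x := xv p in
  let f := fv p in
  pbr q (fE i j) (fE k l) p =
          2^-1 * f i j * f k l *
            ((i != k)%:R * (x i + x k) / (x i - x k) + (j != l)%:R * (x j + x l) / (x j - x l)
             + (k != j)%:R * (x k + x j) / (x k - x j) + (l != i)%:R * (x l + x i) / (x l - x i))
        + 2^-1 * f i l * f k j *
            ((i != k)%:R * (x i + x k) / (x i - x k) + (j != l)%:R * (x j + x l) / (x j - x l)
             + (x k + q * x j) / (x k - q * x j) - (x i + q * x l) / (x i - q * x l))
        + 2^-1 * f i j * f i l *
            ((i != k)%:R * (x k + x i) / (x k - x i) + (x i + q * x l) / (x i - q * x l))
        + 2^-1 * f i j * f j l *
            ((j != k)%:R * (x j + x k) / (x j - x k) - (x j + q * x l) / (x j - q * x l))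
        + 2^-1 * f k j * f k l *
            ((i != k)%:R * (x k + x i) / (x k - x i) - (x k + q * x j) / (x k - q * x j))
        + 2^-1 * f l j * f k l *
            ((i != l)%:R * (x i + x l) / (x i - x l) + (x l + q * x j) / (x l - q * x j)).
Proof.
move=> x f; rewrite /x /f pbr_ff_expand /bievaluate /ff_aa /ff_ab /ff_ba /ff_bb.
rewrite !big_cons !big_nil /= !gsum_times_osum !gsum_times_below.
rewrite !gsum_times_below_l !gsum_times_below_r.
(* only one of each pair of mirrored ordered-pair sums survives *)
rewrite (ordpair_swap (A i \* B j) (A k)) (ordpair_swap (A k \* B j) (A i)).
rewrite (ordpair_swap (A k \* B l) (A i)) (ordpair_swap (A i \* B l) (A k)).
rewrite (ordpair_swap (A i \* B j) (A l)) (ordpair_swap (A l \* B j) (A i)).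
rewrite (ordpair_swap (A k \* B l) (A j)) (ordpair_swap (A j \* B l) (A k)).
rewrite !gsum_a !gsum_ab !gsum_ba (gsum_aba k j i) (gsum_aba i l k).
rewrite (gsum_aba l j i) (gsum_aba j l k).
rewrite !cx_mask !cx_masked !cx_masked_sym (cx_antisym p i k) (cx_antisym p i l).
rewrite (cx_antisym p j k) !Zv_cross.
by field; rewrite !denom_neq0.
Qed.
Lemma one_sub_q_neq0 : 1 - q != 0.
Proof. by rewrite subr_eq0 eq_sym. Qed.

Lemma der_aT i c k :
  der p (gbr q p (vA i c)) (fE k k) = - 2^-1 * vcoef i k * (A i c - A k c) * fv p i k.
Proof.
rewrite der_aT_expand /evaluate /aT_terms !big_cons big_nil /=.
rewrite !gsum_times_osum !gsum_times_below /times_below !above_below.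
rewrite (ordpair_swap (A k \* B k) (A i)) (ordpair_swap (A i \* B k) (A k)).
rewrite !gsum_a !gsum_ab (gsum_aba k k i) !cx_mask !Zv_cross /vcoef /=.
by field; rewrite !denom_neq0.
Qed.

Lemma pbr_aT i ga : pbr q (aE i ga) (TE q) p =
  - (q / (2 * (1 - q))) * \sum_(k < n | k != i) vcoef i k * (A i ga - A k ga) * fv p i k.
Proof.
rewrite pbr_coord der_TE; under eq_bigr => k _ do rewrite der_aT.
rewrite (bigD1 i) //= subrr mulr0 mul0r add0r mulr_sumr [RHS]mulr_sumr.
by apply: eq_bigr => k _; field; rewrite one_sub_q_neq0.
Qed.

Lemma der_bT j c k : der p (gbr q p (vB j c)) (fE k k) =
  2^-1 * (vcoef j k * B j c * fv p j k - vcoef k j * B k c * fv p k j).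
Proof.
rewrite der_bT_expand /evaluate /bT_terms !big_cons big_nil /=.
rewrite !gsum_times_osum !gsum_times_below /times_below !above_below.
rewrite (ordpair_swap (A k \* B k) (A j)) (ordpair_swap (A j \* B k) (A k)).
rewrite !gsum_a !gsum_ab (gsum_aba k k j) !cx_mask !Zv_cross /vcoef (cx_antisym p j k) /=.
by field; rewrite !denom_neq0.
Qed.

Lemma pbr_bT j ep : pbr q (bE j ep) (TE q) p = q / (2 * (1 - q)) *
  \sum_(k < n | k != j) (vcoef j k * B j ep * fv p j k - vcoef k j * B k ep * fv p k j).
Proof.
rewrite pbr_coord der_TE; under eq_bigr => k _ do rewrite der_bT.
rewrite (bigD1 j) //= subrr mulr0 add0r mulr_sumr [RHS]mulr_sumr.
by apply: eq_bigr => k _; field; rewrite one_sub_q_neq0.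
Qed.
End OnRegularLocus.

Unset Implicit Arguments.
Set Strict Implicit.

Theorem mainTheorem2 (C : numClosedFieldType) (n d : nat) (q : C)
  (hn : (1 <= n)%N) (hd : (1 <= d)%N) (hq0 : q != 0)
  (hq : forall m : nat, (0 < m)%N -> q ^+ m != 1)
  (p : var n d -> C) (hp : in_hreg q p) :
  let x := xv p in
  let f := fv p in
  let V i k := (x i + x k) / (x i - x k) - (x i + q * x k) / (x i - q * x k) in
  [/\ (forall i k : 'I_n, pbr q (xE i) (xE k) p = 0),
      (forall i j k : 'I_n, pbr q (xE i) (fE j k) p = (i == k)%:R * x i * f j k)
      & (forall i j k l : 'I_n, pbr q (fE i j) (fE k l) p =
          2^-1 * f i j * f k l *
            ((i != k)%:R * (x i + x k) / (x i - x k) + (j != l)%:R * (x j + x l) / (x j - x l)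
             + (k != j)%:R * (x k + x j) / (x k - x j) + (l != i)%:R * (x l + x i) / (x l - x i))
        + 2^-1 * f i l * f k j *
            ((i != k)%:R * (x i + x k) / (x i - x k) + (j != l)%:R * (x j + x l) / (x j - x l)
             + (x k + q * x j) / (x k - q * x j) - (x i + q * x l) / (x i - q * x l))
        + 2^-1 * f i j * f i l *
            ((i != k)%:R * (x k + x i) / (x k - x i) + (x i + q * x l) / (x i - q * x l))
        + 2^-1 * f i j * f j l *
            ((j != k)%:R * (x j + x k) / (x j - x k) - (x j + q * x l) / (x j - q * x l))
        + 2^-1 * f k j * f k l *
            ((i != k)%:R * (x k + x i) / (x k - x i) - (x k + q * x j) / (x k - q * x j))
        + 2^-1 * f l j * f k l *
            ((i != l)%:R * (x i + x l) / (x i - x l) + (x l + q * x j) / (x l - q * x j)))]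
  /\ [/\ (forall i : 'I_n, pbr q (xE i) (TE q) p = q / (1 - q) * x i * f i i),
      (forall (i : 'I_n) (ga : 'I_d), pbr q (aE i ga) (TE q) p =
          - (q / (2 * (1 - q))) *
            \sum_(k < n | k != i) V i k * (av p i ga - av p k ga) * f i k) &
      (forall (j : 'I_n) (ep : 'I_d), pbr q (bE j ep) (TE q) p =
          q / (2 * (1 - q)) *
            \sum_(k < n | k != j) (V j k * bv p j ep * f j k - V k j * bv p k ep * f k j))].
Proof.
move=> x f V.
case: hp => a_sum1 x_neq0 x_neq _ _.
have q_neq1 : q != 1 by move: (hq 1%N isT); rewrite expr1.
have x_neq_qx i j : i != j -> xv p i != q * xv p j by move=> /x_neq [].
split; split.
- exact: pbr_xx.
- exact: pbr_xf.
- exact: (pbr_ff a_sum1 q_neq1 x_neq0 x_neq_qx).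
- exact: pbr_xT.
- exact: (pbr_aT a_sum1 q_neq1 x_neq0 x_neq_qx).
- exact: (pbr_bT a_sum1 q_neq1 x_neq0 x_neq_qx).
Qed.
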